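(* For all program states $(s,h)$ and all $f\in\mathbb{T}$, $$\mathsf{ert}[\![\langle e\rangle:=e']\!](f)(s,h)=\begin{cases} f(s,h[s(e)\mapsto s(e')]) & \text{if } s(e)\in\mathrm{dom}(h),\\ \infty & \text{if } s(e)\notin\mathrm{dom}(h),\end{cases}$$ where $\mathsf{ert}[\![\langle e\rangle:=e']\!](f)=[e\mapsto-]\oplus([e\mapsto e']\mathbin{-\!\!\ominus} f)$.
   Context: Fix a finite set $\mathrm{Vars}$ of variables. A stack is $s\colon\mathrm{Vars}\to\mathbb{N}$; a heap is a partial map $h$ from a finite set $\mathrm{dom}(h)\subseteq\mathbb{N}_{>0}$ to $\mathbb{N}$; $h_1\perp h_2$ means disjoint domains, and then $h_1\star h_2$ is their union; $h[\ell\mapsto v]$ (for $\ell\in\mathrm{dom}(h)$) is the heap updated at $\ell$. $\mathsf{States}$ is the set of pairs $(s,h)$; $s(e)$ is the value of a heap-independent arithmetic expression $e$. $\mathbb{T}$ is the set of functions $\mathsf{States}\to[0,\infty]$. Truncated subtraction: $a\dot- b=\max(a-b,0)$, $\infty\dot- b=\infty$ for finite $b$, $a\dot-\infty=0$. $(f\oplus g)(s,h)=\min\{f(s,h_1)+g(s,h_2)\mid h=h_1\star h_2\}$; $(f\mathbin{-\!\!\ominus} g)(s,h)=\sup\{g(s,h\star h')\dot- f(s,h')\mid h'\perp h\}$. $[e\mapsto e'](s,h)=0$ if $\mathrm{dom}(h)=\{s(e)\}$ and $h(s(e))=s(e')$, else $\infty$; $[e\mapsto-](s,h)=0$ if $\mathrm{dom}(h)=\{s(e)\}$,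 else $\infty$. *)

From HB Require Import structures.
From mathcomp Require Import all_boot all_order all_algebra.
From mathcomp Require Import finmap.
From mathcomp Require Import all_classical all_reals ereal.
Set Implicit Arguments. Unset Strict Implicit. Unset Printing Implicit Defensive.
Import Order.TTheory GRing.Theory Num.Theory.
Local Open Scope classical_set_scope.
Local Open Scope fset_scope.
Local Open Scope ereal_scope.

Definition stack (V : finType) := V -> nat.
Definition heap := {fmap nat -> nat}.
Definition valid_heap (h : heap) : Prop := 0%N \notin domf h.
Definition expr (V : finType) := stack V -> nat.

Definition hdisj (h1 h2 : heap) : Prop := [disjoint domf h1 & domf h2].
(* h1 * h2, meaningful when disjoint *)
Definition hunion (h1 h2 : heap) : heap := catf h1 h2.

(* expectations: maps States -> [0, oo] (nonnegativity imposed separately) *)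
Definition expect (R : realType) (V : finType) := stack V -> heap -> \bar R.

Definition tsub (R : realType) (a b : \bar R) : \bar R :=
  if b == +oo then 0 else maxe (a - b) 0.

(* separating conjunction: min over splittings h = h1 * h2 of valid heaps
   (an empty set of splittings gives inf = +oo) *)
Definition sepcon (R : realType) (V : finType) (f g : expect R V) : expect R V :=
  fun s h => ereal_inf [set x | exists h1 h2 : heap,
      [/\ valid_heap h1, valid_heap h2, hdisj h1 h2, h = hunion h1 h2
        & x = f s h1 + g s h2]].

Definition sepimp (R : realType) (V : finType) (f g : expect R V) : expect R V :=
  fun s h => ereal_sup [set x | exists h' : heap,
      [/\ valid_heap h', hdisj h' h & x = tsub (g s (hunion h h')) (f s h')]].

Definition pto (R : realType) (V : finType) (e e' : expr V) : expect R V :=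
  fun s h => if (domf h == [fset e s]) && (fnd h (e s) == Some (e' s)) then 0 else +oo.

Definition pto_any (R : realType) (V : finType) (e : expr V) : expect R V :=
  fun s h => if domf h == [fset e s] then 0 else +oo.

Definition ert_mut (R : realType) (V : finType) (e e' : expr V) (f : expect R V)
  : expect R V :=
  sepcon (pto_any R e) (sepimp (pto R e e') f).

From HB Require Import structures.
From mathcomp Require Import all_boot all_order all_algebra.
From mathcomp Require Import finmap.
From mathcomp Require Import all_classical all_reals ereal.
Local Open Scope fset_scope.
Local Open Scope fmap_scope.
Local Open Scope ereal_scope.
Set Implicit Arguments.
Unset Strict Implicit.
Unset Printing Implicit Defensive.
Import Order.TTheory.

(* A splitting h = h1 * h2 has finite cost only if h1 is the single cell at
   [e s], so the only relevant splitting is h = {e s |-> _} * h.[~ e s].  On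
   h.[~ e s] the magic wand against [e |-> e'] is attained by the single
   extension that is not charged +oo, namely h.[~ e s].[e s <- e' s], which
   is h.[e s <- e' s]. *)

Lemma valid_heap0 : valid_heap [fmap].
Proof. by []. Qed.

Lemma valid_heap_setf (h : heap) (l v : nat) :
  valid_heap h -> l != 0%N -> valid_heap h.[l <- v].
Proof. by move=> hv l0; rewrite /valid_heap dom_setf !inE negb_or eq_sym l0. Qed.

Lemma valid_heap_rem1 (h : heap) (l : nat) : valid_heap h -> valid_heap h.[~ l].
Proof. by move=> hv; rewrite /valid_heap domf_rem !inE negb_and hv orbT. Qed.

Lemma dom_singleton (l v : nat) : domf ([fmap].[l <- v] : heap) = [fset l].
Proof. by rewrite dom_setf domf0 fsetU0. Qed.

Lemma fnd_dom1 (h : heap) (l k : nat) :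
  domf h = [fset l] -> k != l -> h.[? k] = None.
Proof.
move=> dh kl; apply: not_fnd; apply: contraNN kl.
by rewrite -[_ \in h]/(k \in domf h) dh inE.
Qed.

Lemma singleton_heapE (h : heap) (l v : nat) :
  domf h = [fset l] -> h.[? l] = Some v -> h = [fmap].[l <- v].
Proof.
move=> dh hl; apply/fmapP => k; rewrite fnd_set; case: eqP => [-> //|/eqP kl].
by rewrite fnd_fmap0 (fnd_dom1 dh kl).
Qed.

Lemma hdisj_singleton (h : heap) (l v : nat) :
  l \notin domf h -> hdisj [fmap].[l <- v] h.
Proof. by move=> lh; apply/fdisjointP => a; rewrite dom_singleton inE => /eqP ->. Qed.

Lemma hunion_singleton (h : heap) (l v : nat) :
  hunion h [fmap].[l <- v] = h.[l <- v].
Proof. by rewrite /hunion catf_setr catf0. Qed.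

Lemma setf_hunion_dom1 (h1 h2 : heap) (l v : nat) :
  domf h1 = [fset l] -> (hunion h1 h2).[l <- v] = h2.[l <- v].
Proof.
move=> d1; apply/fmapP => k; rewrite !fnd_set fnd_cat; case: eqP => // /eqP kl.
by case: ifPn => // kn; rewrite (fnd_dom1 d1 kl) (not_fnd kn).
Qed.

Lemma heap_split (h : heap) (l : nat) (lh : l \in domf h) :
  h = hunion [fmap].[l <- h.[lh]] h.[~ l].
Proof.
rewrite /hunion catf_setl mem_remf1 eqxx /= cat0f setf_rem1.
exact/esym/(setf_get [` lh]).
Qed.

Section Expectations.

Variables (R : realType) (V : finType).
Implicit Types (a b : \bar R) (s : stack V) (h : heap) (e : expr V).

Lemma tsub_ge0 a b : 0 <= tsub a b.
Proof. by rewrite /tsub; case: ifP => _; rewrite ?le_max lexx ?orbT. Qed.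

Lemma tsub0 a : 0 <= a -> tsub a 0 = a.
Proof. by move=> a0; rewrite /tsub /= sube0; apply/max_idPl. Qed.

Lemma tsuby a : tsub a +oo = 0.
Proof. by rewrite /tsub eqxx. Qed.

Lemma sepimp_ge0 (g f : expect R V) s h : 0 <= sepimp g f s h.
Proof.
apply: le_trans (ereal_sup_ubound _); last first.
  by exists [fmap]; split; [exact: valid_heap0 | exact/fdisjointP | reflexivity].
exact: tsub_ge0.
Qed.

Lemma ptoE e e' s h :
  pto R e e' s h = if h == [fmap].[e s <- e' s] then 0 else +oo.
Proof.
rewrite /pto; case: (eqVneq h) => [->|nh].
  by rewrite fnd_set !eqxx andbT dom_singleton eqxx.
case: ifP => // /andP[/eqP dh /eqP hl].
by case/eqP: nh; exact: singleton_heapE.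
Qed.

Lemma pto_any_singleton e s v : pto_any R e s [fmap].[e s <- v] = 0.
Proof. by rewrite /pto_any dom_singleton eqxx. Qed.

Variable (f : expect R V).
Hypothesis f_nneg : forall s h, valid_heap h -> 0 <= f s h.

Lemma sepimp_pto e e' s h :
  valid_heap h -> e s != 0%N -> e s \notin domf h ->
  sepimp (pto R e e') f s h = f s h.[e s <- e' s].
Proof.
move=> hv l0 lh; have hv' := valid_heap_setf (e' s) hv l0.
apply/le_anti/andP; split.
- apply: ge_ereal_sup => _ [h' [_ _ ->]]; rewrite ptoE.
  case: eqP => [->|_]; last by rewrite tsuby f_nneg.
  by rewrite tsub0 hunion_singleton ?f_nneg.
- apply: ereal_sup_ubound; exists [fmap].[e s <- e' s]; split.
  + exact: valid_heap_setf valid_heap0 l0.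
  + exact: hdisj_singleton.
  + by rewrite ptoE eqxx tsub0 hunion_singleton ?f_nneg.
Qed.

Lemma ert_mut_summand_ge e e' s h h1 h2 :
  valid_heap h -> valid_heap h2 -> hdisj h1 h2 -> h = hunion h1 h2 ->
  (if e s \in domf h then f s h.[e s <- e' s] else +oo) <=
    pto_any R e s h1 + sepimp (pto R e e') f s h2.
Proof.
move=> hv v2 dj hE; subst h; rewrite /pto_any.
case: (eqVneq (domf h1) [fset e s]) => [d1|_]; last first.
  by rewrite addye ?leey // gt_eqF // (lt_le_trans _ (sepimp_ge0 _ _ _ _)) ?ltNy0.
have l1 : e s \in domf h1 by rewrite d1 inE.
have l0 : e s != 0%N by apply: contraNneq hv => <-; rewrite /hunion mem_catf l1.
have ln : e s \notin domf h2 by move/fdisjointP: dj; apply.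
by rewrite mem_catf l1 add0e sepimp_pto // setf_hunion_dom1.
Qed.

End Expectations.

Theorem mainTheorem14 (R : realType) (V : finType) (e e' : expr V)
    (f : expect R V)
    (f_nneg : forall (s : stack V) (h : heap), valid_heap h -> (0%E <= f s h)%E)
    (s : stack V) (h : heap) (hv : valid_heap h) :
  ert_mut e e' f s h =
    if e s \in domf h then f s h.[e s <- e' s] else +oo.
Proof.
apply/le_anti/andP; split; last first.
  apply: le_ereal_inf_tmp => _ [h1 [h2 [_ v2 dj hE ->]]].
  exact: ert_mut_summand_ge.
case: ifPn => lh; last exact: leey.
have l0 : e s != 0%N by apply: contraNneq hv => <-.
have ln : e s \notin domf h.[~ e s] by rewrite domf_rem !inE eqxx.
apply: ereal_inf_lbound; exists [fmap].[e s <- h.[lh]], h.[~ e s]; split.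
- exact: valid_heap_setf valid_heap0 l0.
- exact: valid_heap_rem1.
- exact: hdisj_singleton.
- exact: heap_split.
- have hrv := valid_heap_rem1 (e s) hv.
  by rewrite pto_any_singleton add0e sepimp_pto // setf_rem1.
Qed.
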